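(* Let $X_n:\Omega\to\mathbb{R}$, $n\in\mathbb{N}$, and $X:\Omega\to\mathbb{R}$ be discrete random variables with $X_n\to X$ in distribution, and assume there is a discrete set $E\subset\mathbb{R}$ (a set without accumulation points in $\mathbb{R}$) containing the ranges of $X$ and of all $X_n$. Let $F_n$ and $F$ be the distribution functions of $X_n$ and $X$. For $(m,n)\in\mathbb{N}^2$ let $X_n^1,\ldots,X_n^m$ be i.i.d. with distribution function $F_n$, and let $F_{m,n}(x)=\frac1m\sum_{i=1}^m\mathbb{1}\{X_n^i\le x\}$ be their empirical distribution function. Then \[ \lim_{n\to\infty}\sup_{x\in\mathbb{R}}|F_{n,n}(x)-F(x)|=0\quad P\text{-a.s.} \] *)

From HB Require Import structures.
From mathcomp Require Import all_boot all_order all_algebra.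
From mathcomp Require Import all_classical all_reals all_analysis.
Set Implicit Arguments. Unset Strict Implicit. Unset Printing Implicit Defensive.
Import Order.TTheory GRing.Theory Num.Theory.
Import numFieldNormedType.Exports.
Local Open Scope classical_set_scope.
Local Open Scope ring_scope.

Definition discrete_set (R : realType) (E : set R) : Prop :=
  forall x : R, exists2 e : R, 0 < e & forall y, E y -> `|y - x| < e -> y = x.

Definition distr_fun d (T : measurableType d) (R : realType)
  (P : probability T R) (X : {RV P >-> R}) (x : R) : R := fine (cdf X x).

Definition cvg_in_distribution d (T : measurableType d) (R : realType)
  (P : probability T R) (Xn : nat -> {RV P >-> R}) (X : {RV P >-> R}) : Prop :=
  forall x : R, {for x, continuous (distr_fun X)} ->
    distr_fun (Xn n) x @[n --> \oo] --> distr_fun X x.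

Definition mutually_independent d (T : measurableType d) (R : realType)
  (P : probability T R) (m : nat) (Y : nat -> {RV P >-> R}) : Prop :=
  forall (J : {set 'I_m}) (B : 'I_m -> set R), (forall i, measurable (B i)) ->
    P (\bigcap_(i in [set i | i \in J]) (Y i @^-1` B i)) =
    (\prod_(i in J) P (Y i @^-1` B i))%E.

Definition empirical_df d (T : measurableType d) (R : realType)
  (P : probability T R) (m : nat) (Y : nat -> {RV P >-> R}) (w : T) (x : R) : R :=
  (m%:R)^-1 * \sum_(i < m) (((Y i w <= x)%R)%:R : R).

(* Since E is discrete, the distribution function of a random variable with
   values in E is constant on some interval [x, x + e), so convergence in
   distribution gives F_n(x) -> F(x) at every x.  At a fixed point t the
   indicators 1{X_n^i <= t}, i < n, are independent Bernoulli(F_n(t))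
   variables; the fourth central moment of a Binomial(n, p) count is at most
   n^2, hence P(|F_{n,n}(t) - F_n(t)| >= eps) <= 1 / (eps^4 n^2), which is
   summable, and Borel-Cantelli gives F_{n,n}(t) -> F(t) almost surely.  For
   uniformity, choose a, b with F(a) <= eps and F(b) >= 1 - eps: only finitely
   many points of E lie in [a, b], and F as well as (almost surely) every
   F_{n,n} is constant between consecutive such points, so
   sup_x |F_{n,n}(x) - F(x)| is at most eps plus finitely many pointwise
   errors. *)

From mathcomp Require Import all_boot all_order all_algebra.
From mathcomp Require Import all_classical all_reals all_analysis.
From mathcomp Require Import ring lra.
Import Order.TTheory GRing.Theory Num.Theory.
Import numFieldNormedType.Exports.
Local Open Scope classical_set_scope.
Local Open Scope ring_scope.
Set Implicit Arguments. Unset Strict Implicit. Unset Printing Implicit Defensive.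

Section binomial_moments.
Variables (R : realFieldType) (p : R).

Definition bin_weight n k : R := 'C(n, k)%:R * p ^+ k * (1 - p) ^+ (n - k).

Definition bin_expect n (g : nat -> R) : R := \sum_(k < n.+1) bin_weight n k * g k.

Lemma bin_weightSS n k :
  bin_weight n.+1 k.+1 = p * bin_weight n k + (1 - p) * bin_weight n k.+1.
Proof.
rewrite /bin_weight binS natrD subSS.
have [kn|nk] := ltnP k n.
  by rewrite -(subnSK kn) !exprS; ring.
by rewrite bin_small ?ltnS // (eqP (_ : n - k == 0)%N) ?subn_eq0 // !exprS; ring.
Qed.

Lemma bin_weightS0 n : bin_weight n.+1 0 = (1 - p) * bin_weight n 0.
Proof. by rewrite /bin_weight !bin0 !subn0 exprS; ring. Qed.

Lemma bin_weight_small n k : (n < k)%N -> bin_weight n k = 0.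
Proof. by move=> nk; rewrite /bin_weight bin_small // !mul0r. Qed.

Lemma bin_expectS n g :
  bin_expect n.+1 g = (1 - p) * bin_expect n g + p * bin_expect n (g \o succn).
Proof.
have head m (f : nat -> R) : \sum_(k < m.+1) bin_weight m k * f k =
    bin_weight m 0 * f 0%N + \sum_(k < m) bin_weight m k.+1 * f k.+1.
  by rewrite big_ord_recl.
have tail : \sum_(k < n.+1) bin_weight n.+1 k.+1 * g k.+1 =
    p * \sum_(k < n.+1) bin_weight n k * g k.+1 +
    (1 - p) * \sum_(k < n) bin_weight n k.+1 * g k.+1.
  rewrite [X in _ = _ + _ * X](_ : _ = \sum_(k < n.+1) bin_weight n k.+1 * g k.+1).
    rewrite !mulr_sumr -big_split /=; apply: eq_bigr => k _.
    by rewrite bin_weightSS; ring.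
  by rewrite [in RHS]big_ord_recr /= bin_weight_small // mul0r addr0.
by rewrite /bin_expect (head n.+1) tail head bin_weightS0; ring.
Qed.

Lemma bin_expect_centered_pow4 n x : let m := n%:R in let q := 1 - p in
  bin_expect n (fun k => (k%:R - x) ^+ 4) =
    (m * p - x) ^+ 4 + 6 * m * p * q * (m * p - x) ^+ 2
    + 4 * m * p * q * (q - p) * (m * p - x) + m * p * q * (1 + 3 * (m - 2) * p * q).
Proof.
elim: n x => [|n IHn] x /=.
  by rewrite /bin_expect big_ord1 /bin_weight bin0 subn0 !expr0 /=; ring.
move: IHn => /= IHn.
rewrite bin_expectS IHn.
have -> : bin_expect n ((fun k => (k%:R - x) ^+ 4) \o succn) =
    bin_expect n (fun k => (k%:R - (x - 1)) ^+ 4).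
  by apply: eq_bigr => k _; rewrite /= mulrS; congr (_ * _ ^+ _); ring.
by rewrite IHn /= mulrS; ring.
Qed.

Lemma bin_expect_centered_pow4_le n : 0 <= p <= 1 ->
  bin_expect n (fun k => (k%:R - n%:R * p) ^+ 4) <= n%:R ^+ 2.
Proof.
move=> /andP[p0 p1]; rewrite bin_expect_centered_pow4 /=.
set m : R := n%:R; set u := p * (1 - p).
have u0 : 0 <= u by apply: mulr_ge0; lra.
have u_le : u <= 1 / 4 by rewrite /u; have := sqr_ge0 (p - 1 / 2); nra.
rewrite [X in X <= _](_ : _ = m * u + 3 * m * (m - 2) * u ^+ 2); last by rewrite /u; ring.
have [->|m1] : m = 0 \/ 1 <= m.
  by rewrite /m; have [->|n0] := posnP n; [left|right; rewrite ler1n].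
  by rewrite !(mul0r, mulr0) addr0 expr0n.
have uu : u ^+ 2 <= 1 / 16 by rewrite expr2; nra.
have mmu : m * (m - 2) * u ^+ 2 <= m ^+ 2 / 16 by rewrite expr2 in uu *; nra.
rewrite expr2 in mmu *; nra.
Qed.

End binomial_moments.

Lemma sum_set_card (V : nmodType) n (f : nat -> V) :
  \sum_(J : {set 'I_n}) f #|J| = \sum_(k < n.+1) f k *+ 'C(n, k).
Proof.
rewrite (partition_big (fun J : {set 'I_n} => (inord #|J| : 'I_n.+1)) predT) //=.
have cardJ (J : {set 'I_n}) : (#|J| < n.+1)%N.
  by rewrite ltnS -[X in (_ <= X)%N](card_ord n) max_card.
apply: eq_bigr => k _.
transitivity (\sum_(J in [set J : {set 'I_n} | #|J| == k]%SET) f k).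
  apply: eq_big => J; last by move/eqP <-; rewrite inordK.
  rewrite inE; apply/eqP/eqP => [<-|Jk]; first by rewrite inordK.
  by apply: val_inj; rewrite /= -Jk inordK.
by rewrite sumr_const card_draws card_ord.
Qed.

Lemma filter_forall_seq (T : Type) (F : set_system T) {FF : Filter F} (I : eqType)
    (s : seq I) (Q : I -> T -> Prop) :
  (forall i, i \in s -> \forall x \near F, Q i x) ->
  \forall x \near F, forall i, i \in s -> Q i x.
Proof.
elim: s => [_|i s IHs FQ]; first exact: filterE.
apply: filterS2 (FQ i (mem_head _ _)) (IHs _) => [x Qi Qs j|j js].
  by rewrite in_cons => /predU1P[->|]; [exact: Qi|exact: Qs].
by apply: FQ; rewrite in_cons js orbT.
Qed.

Section gaps.
Variable R : realType.

Definition gap (A : set R) (t u : R) := forall y, A y -> ~ (t < y < u).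

Definition constant_on_gaps (s : seq R) (f : R -> R) :=
  forall t u, t \in s -> u \in s -> gap [set` s] t u ->
  forall x, t <= x < u -> f x = f t.

Lemma gap_around (s : seq R) (a b x : R) : a \in s -> b \in s -> a <= x < b ->
  exists t u, [/\ t \in s, u \in s, t <= x < u & gap [set` s] t u].
Proof.
move=> sa sb /andP[ax xb].
pose t := \big[Order.max/a]_(y <- s | y <= x) y.
pose u := \big[Order.min/b]_(y <- s | x < y) y.
have max_eq (y z : R) : Num.max y z = y \/ Num.max y z = z.
  by rewrite /Num.max /Order.max; case: ifP; [right|left].
have min_eq (y z : R) : Num.min y z = y \/ Num.min y z = z.
  by rewrite /Num.min /Order.min; case: ifP; [left|right].
exists t, u; split.
- rewrite /t big_seq_cond; apply: (big_ind (fun z => z \in s)) => [//||y /andP[]//].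
  by move=> y z ys zs; case: (max_eq y z) => ->.
- rewrite /u big_seq_cond; apply: (big_ind (fun z => z \in s)) => [//||y /andP[]//].
  by move=> y z ys zs; case: (min_eq y z) => ->.
- rewrite bigmax_le //=; apply: (big_ind (fun z => x < z)) => // y z xy xz.
  by case: (min_eq y z) => ->.
- move=> y ys /andP[ty yu]; have [yx|xy] := leP y x.
    by move: ty; rewrite ltNge (le_bigmax_seq _ _ _ _ ys yx).
  by move: yu; rewrite ltNge (ge_bigmin_seq _ _ _ _ ys xy).
Qed.

Definition tail_grid (F : R -> R) (eps : R) (s : seq R) :=
  exists a b, [/\ a \in s, b \in s, F a <= eps & 1 - eps <= F b].

Lemma sup_range_norm_le (f : R -> R) (c : R) : (forall x, `|f x| <= c) ->
  `|sup (range (fun x => `|f x|))| <= c.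
Proof.
move=> fc; have ne : range (fun x => `|f x|) !=set0 by exists `|f 0|, 0.
have ub : ubound (range (fun x => `|f x|)) c by move=> _ [x _ <-].
rewrite ger0_norm ?ge_sup //; apply: le_trans (normr_ge0 (f 0)) _.
by apply: ub_le_sup; [exists c | exists 0].
Qed.

Section grid_approximation.
Variable F : R -> R.
Hypothesis F01 : forall x, 0 <= F x <= 1.
Hypothesis F_nd : {homo F : x y / x <= y}.

Lemma dist_le_on_grid (G : R -> R) (s : seq R) (eps delta : R) :
  (forall x, 0 <= G x <= 1) -> {homo G : x y / x <= y} ->
  tail_grid F eps s -> constant_on_gaps s F -> constant_on_gaps s G ->
  (forall t, t \in s -> `|G t - F t| <= delta) ->
  forall x, `|G x - F x| <= eps + delta.
Proof.
move=> G01 G_nd [a [b [sa sb Fa Fb]]] Fgap Ggap sdelta x.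
have := sdelta _ sa; have := sdelta _ sb; rewrite !ler_norml.
have := F01 x; have := G01 x; have := F01 a; have := F01 b.
have [xa|ax] := ltP x a.
  by have := F_nd (ltW xa); have := G_nd _ _ (ltW xa); lra.
have [bx|xb] := leP b x.
  by have := F_nd bx; have := G_nd _ _ bx; lra.
have axb : a <= x < b by rewrite ax xb.
have [t [u [ts us /andP[tx xu] stu]]] := gap_around sa sb axb.
have Fx : F x = F t by apply: (Fgap t u); rewrite ?tx.
have Gx : G x = G t by apply: (Ggap t u); rewrite ?tx.
by rewrite Fx Gx; have := sdelta _ ts; rewrite ler_norml; lra.
Qed.

Lemma sup_dist_cvg0 (G : nat -> R -> R) :
  (forall n x, 0 <= G n x <= 1) -> (forall n, {homo G n : x y / x <= y}) ->
  (forall k, exists2 s, tail_grid F k.+1%:R^-1 s &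
    [/\ constant_on_gaps s F, forall n, constant_on_gaps s (G n)
      & forall t, t \in s -> G n t - F t @[n --> \oo] --> 0]) ->
  sup (range (fun x => `|G n x - F x|)) @[n --> \oo] --> 0.
Proof.
move=> G01 G_nd grids; apply/cvgr0Pnorm_le => e e0.
have e2 : 0 < e / 2 by rewrite divr_gt0.
have [k _ /(_ k (leqnn k)) /= ke] := near_infty_natSinv_lt (PosNum e2).
have [s Ftail [Fgap Ggap Gcvg]] := grids k.
have : \forall n \near \oo, forall t, t \in s -> `|G n t - F t| <= e / 2.
  by apply: filter_forall_seq => t /Gcvg /cvgr0Pnorm_le; apply.
apply: filterS => n sn; apply: sup_range_norm_le => x.
have := dist_le_on_grid (G01 n) (G_nd n) Ftail Fgap (Ggap n) sn x.
by move/le_trans; apply; rewrite [leRHS](splitr e) lerD2r ltW.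
Qed.

End grid_approximation.

End gaps.

Section discrete_sets.
Variables (R : realType) (E : set R).
Hypothesis dE : discrete_set E.

Lemma discrete_set_gap x : exists2 e, 0 < e & gap E x (x + e).
Proof.
have [e e0 Ex] := dE x; exists e => // y Ey /andP[xy ye].
have yx : y = x by apply: Ex; rewrite // gtr0_norm ?subr_gt0 // ltrBlDl.
by move: xy; rewrite yx ltxx.
Qed.

Lemma discrete_set_itv_finite (a b : R) :
  exists s : seq R, forall y, E y -> a <= y <= b -> y \in s.
Proof.
have [r Er] := choice (fun x => match dE x with ex_intro2 e e0 Ex => ex_intro
  (fun e => 0 < e /\ forall y, E y -> `|y - x| < e -> y = x) e (conj e0 Ex) end).
have := @segment_compact R a b; rewrite compact_cover => cpt.
have [D _ cov] : finite_subset_cover `[a, b] (fun x => ball x (r x)) `[a, b].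
  apply: cpt => [x _|y yab]; first exact: ball_open.
  by exists y => //; apply: ballxx; exact: (Er y).1.
exists (finmap.enum_fset D) => y Ey yab.
have /cov[x Dx xy] : `[a, b]%classic y by rewrite /= in_itv.
by rewrite ((Er x).2 y Ey) ?(distrC y) //; exact: Dx.
Qed.

Definition gaps_avoid (s : seq R) :=
  forall t u, t \in s -> u \in s -> gap [set` s] t u -> gap E t u.

Lemma exists_tail_grid (F : R -> R) (eps : R) : {homo F : x y / x <= y} ->
  (exists a, F a <= eps) -> (exists b, 1 - eps <= F b) ->
  exists2 s, tail_grid F eps s & gaps_avoid s.
Proof.
move=> F_nd [a Fa] [b0 Fb0]; pose b := Num.max a b0.
have ab : a <= b by rewrite le_max lexx.
have [s0 Es0] := discrete_set_itv_finite a b.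
pose s := a :: b :: [seq y <- s0 | a <= y <= b].
have s_ab z : z \in s -> a <= z <= b.
  by rewrite !inE mem_filter => /or3P[/eqP->|/eqP->|/andP[]//]; rewrite ?lexx ab.
exists s.
  exists a, b; split; rewrite ?inE ?eqxx ?orbT //.
  by apply: le_trans Fb0 (F_nd _ _ _); rewrite le_max lexx orbT.
move=> t u ts us stu y Ey /andP[ty yu]; apply: (stu y); last by rewrite ty.
have /andP[a_t _] := s_ab t ts; have /andP[_ u_b] := s_ab u us.
have yab : a <= y <= b by rewrite (le_trans a_t (ltW ty)) (le_trans (ltW yu) u_b).
by rewrite /= !inE mem_filter yab Es0 ?orbT.
Qed.

End discrete_sets.

Section distribution_functions.
Context d (T : measurableType d) (R : realType) (P : probability T R).
Implicit Types Z W : {RV P >-> R}.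

Lemma distr_funE Z x : P (Z @^-1` `]-oo, x]) = (distr_fun Z x)%:E.
Proof. by rewrite /distr_fun fineK // fin_num_measure. Qed.

Lemma distr_fun_ge0_le1 Z x : 0 <= distr_fun Z x <= 1.
Proof.
by rewrite -!lee_fin -distr_funE; apply/andP; split; [exact: cdf_ge0|exact: cdf_le1].
Qed.

Lemma distr_fun_nondecreasing Z : {homo distr_fun Z : x y / x <= y}.
Proof. by move=> x y xy; rewrite -lee_fin -!distr_funE; exact: cdf_nondecreasing. Qed.

Lemma distr_fun_gap Z (A : set R) t u : range Z `<=` A -> gap A t u ->
  forall x, t <= x < u -> distr_fun Z x = distr_fun Z t.
Proof.
move=> ZA gapA x /andP[tx xu]; apply/EFin_inj; rewrite -!distr_funE; congr (P _).
apply/seteqP; split => w /=; rewrite !in_itv /=; last by move/le_trans; apply.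
move=> Zx; rewrite leNgt; apply/negP => tZ.
by apply: (gapA (Z w)); [exact: ZA | rewrite tZ (le_lt_trans Zx xu)].
Qed.

Lemma distr_fun_small Z eps : 0 < eps -> exists a, distr_fun Z a <= eps.
Proof.
move=> eps0; have /fine_cvgP[_] := cvg_cdfNy0 Z.
move/cvgrPdist_le => /(_ eps eps0) [M [_ HM]].
exists (M - 1); have := HM (M - 1); rewrite ltrBlDr ltrDl ltr01 => /(_ isT) /=.
by rewrite sub0r normrN => /(le_trans (ler_norm _)).
Qed.

Lemma distr_fun_large Z eps : 0 < eps -> exists b, 1 - eps <= distr_fun Z b.
Proof.
move=> eps0; have /fine_cvgP[_] := cvg_cdfy1 Z.
move/cvgrPdist_le => /(_ eps eps0) [M [_ HM]].
exists (M + 1); have := HM (M + 1); rewrite ltrDl ltr01 => /(_ isT) /=.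
by have := ler_norm (1 - distr_fun Z (M + 1)); lra.
Qed.

Lemma measure_itv_oc Z t s : t <= s ->
  P (Z @^-1` `]t, s]) = (distr_fun Z s - distr_fun Z t)%:E.
Proof.
move=> ts; have mZ r : measurable (Z @^-1` `]-oo, r]) by exact: measurable_funPTI.
have -> : Z @^-1` `]t, s] = Z @^-1` `]-oo, s] `\` Z @^-1` `]-oo, t].
  apply/seteqP; split => w /=; rewrite !in_itv /= ?andbT.
    by move=> /andP[tw ->]; split => //; apply/negP; rewrite -ltNge.
  by move=> [-> /negP]; rewrite -ltNge => ->.
rewrite measureD ?mZ -?ge0_fin_numE ?fin_num_measure ?mZ //.
rewrite (_ : _ `&` _ = Z @^-1` `]-oo, t]) ?EFinB -?distr_funE //.
apply/seteqP; split => w /=; rewrite !in_itv /=; first by case.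
by move=> wt; split => //; apply: le_trans wt ts.
Qed.

Lemma ae_notin_gap W t u : (forall x, t <= x < u -> distr_fun W x = distr_fun W t) ->
  {ae P, forall w, ~ (t < W w < u)}.
Proof.
move=> Wflat; apply: (@negligibleS _ _ _ _ (\bigcup_m W @^-1` `]t, u - m.+1%:R^-1])).
  move=> w /= /contrapT /andP[tw wu].
  exists (Num.truncn (u - W w)^-1) => //=; rewrite in_itv /= tw /=.
  rewrite lerBrDr addrC -lerBrDr ltW // -invf_plt ?posrE ?ltr0n ?subr_gt0 //.
  exact: truncnS_gt.
apply: negligible_bigcup => m; apply/negligibleP; first exact: measurable_funPTI.
have [st|ts] := leP (u - m.+1%:R^-1) t.
  by rewrite set_itv_ge ?preimage_set0 ?measure0 // bnd_simp -leNgt.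
apply: eq_trans (measure_itv_oc W (ltW ts)) _.
by rewrite Wflat ?subrr // ltW //= gtrBl invr_gt0 ltr0n.
Qed.

Lemma cvg_distr_fun_discrete (E : set R) (Xn : nat -> {RV P >-> R}) (X : {RV P >-> R}) :
  discrete_set E -> range X `<=` E -> (forall n, range (Xn n) `<=` E) ->
  cvg_in_distribution Xn X -> forall x, distr_fun (Xn n) x @[n --> \oo] --> distr_fun X x.
Proof.
move=> dE XE XnE cvgX x; have [e e0 gapE] := discrete_set_gap dE x.
have flat Z y : range Z `<=` E -> x <= y < x + e -> distr_fun Z y = distr_fun Z x.
  by move=> ZE; apply: distr_fun_gap ZE gapE y.
pose x' := x + e / 2.
have xx' : x <= x' < x + e.
  by rewrite lerDl ltrD2l divr_ge0 ?ltW // ltr_pdivrMr // ltr_pMr // ltr1n.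
have contX : {for x', continuous (distr_fun X)}.
  apply/cvgrPdist_le => eps eps0; apply/nbhs_ballP.
  exists (e / 2) => /=; first by rewrite divr_gt0.
  move=> y /=; rewrite /ball /= ltr_distl => /andP[y1 y2].
  rewrite (flat _ x' XE) // (flat _ y XE); first by rewrite subrr normr0 ltW.
  by rewrite /x' in y1 y2 *; apply/andP; split; lra.
have := cvgX x' contX; rewrite (flat _ x' XE) //.
by under eq_fun do rewrite (flat _ x' (XnE _)) //.
Qed.

End distribution_functions.

Lemma ae_imply_cst d (T : measurableType d) (R : realType)
    (mu : {measure set T -> \bar R}) (A : Prop) (Q : T -> Prop) :
  (A -> {ae mu, forall w, Q w}) -> {ae mu, forall w, A -> Q w}.
Proof.
have [a /(_ a)|na _] := pselect A; first by apply: filterS => w Qw _.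
by apply: aeW => w /na.
Qed.

Lemma le_measure_bigsetU d (T : measurableType d) (R : realType)
    (mu : {measure set T -> \bar R}) (I : Type) (r : seq I) (Q : pred I) (F : I -> set T) :
  (forall i, Q i -> measurable (F i)) ->
  (mu (\big[setU/set0]_(i <- r | Q i) F i) <= \sum_(i <- r | Q i) mu (F i))%E.
Proof.
move=> mF; apply: proj2 (big_ind2 (fun A x => measurable A /\ (mu A <= x)%E) _ _ _).
- by rewrite measure0.
- move=> A x B y [mA Ax] [mB By]; split; first exact: measurableU.
  by apply: le_trans (measureU2 _ _ _) _ => //; apply: leeD.
- by move=> i Qi; split; [exact: mF|].
Qed.

Section empirical_distribution_function.
Context d (T : measurableType d) (R : realType) (P : probability T R).
Variables (n : nat) (Y : nat -> {RV P >-> R}).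

Lemma empirical_dfE w x :
  empirical_df n Y w x = #|[set i : 'I_n | Y i w <= x]%SET|%:R / n%:R.
Proof.
rewrite /empirical_df mulrC -sum1_card natr_sum [in RHS]big_mkcond /=.
by congr (_ * _); apply: eq_bigr => i _; rewrite inE; case: (Y i w <= x).
Qed.

Lemma empirical_df_ge0_le1 w x : 0 <= empirical_df n Y w x <= 1.
Proof.
rewrite empirical_dfE divr_ge0 //=; have [->|n0] := posnP n; first by rewrite invr0 mulr0.
rewrite ler_pdivrMr ?ltr0n // mul1r ler_nat.
by rewrite -[X in (_ <= X)%N](card_ord n) max_card.
Qed.

Lemma empirical_df_nondecreasing w : {homo empirical_df n Y w : x y / x <= y}.
Proof.
move=> x y xy; rewrite !empirical_dfE ler_wpM2r ?invr_ge0 // ler_nat subset_leq_card //.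
by apply/fintype.subsetP => i; rewrite !inE => /le_trans; apply.
Qed.

Lemma empirical_df_gap w t u : (forall i, (i < n)%N -> ~ (t < Y i w < u)) ->
  forall x, t <= x < u -> empirical_df n Y w x = empirical_df n Y w t.
Proof.
move=> noY x /andP[tx xu]; rewrite !empirical_dfE; congr (_%:R / _).
apply: eq_card => i; rewrite !inE; apply/idP/idP => [iy|/le_trans]; last exact.
rewrite leNgt; apply/negP => ti; apply: (noY i (ltn_ord i)).
by rewrite ti (le_lt_trans iy xu).
Qed.

End empirical_distribution_function.

Section pattern_events.
Context d (T : measurableType d) (R : realType) (P : probability T R).
Variables (n : nat) (Y : nat -> {RV P >-> R}) (t : R).

Definition side_set (J : {set 'I_n}) (i : 'I_n) : set R :=
  if i \in J then `]-oo, t]%classic else `]t, +oo[%classic.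

(* Indexed as in [mutually_independent n Y] with [J := [set: 'I_n]]. *)
Definition pattern_event (J : {set 'I_n}) : set T :=
  \bigcap_(i in [set i | i \in [set: 'I_n]%SET]) Y i @^-1` side_set J i.

Lemma pattern_event_self w : pattern_event [set i : 'I_n | Y i w <= t]%SET w.
Proof.
move=> i _ /=; rewrite /side_set inE; case: ifPn; rewrite /= in_itv //= andbT.
by rewrite -ltNge.
Qed.

Lemma measurable_pattern_event J : measurable (pattern_event J).
Proof.
apply: fin_bigcap_measurable; first exact: finite_finset.
by move=> i _; apply: measurable_funPTI; rewrite /side_set; case: ifP.
Qed.

Lemma probability_pattern_event (p : R) (J : {set 'I_n}) : mutually_independent n Y ->
  (forall i, (i < n)%N -> P (Y i @^-1` `]-oo, t]) = p%:E) ->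
  P (pattern_event J) = (p ^+ #|J| * (1 - p) ^+ (n - #|J|))%:E.
Proof.
move=> indY Yp; rewrite /pattern_event indY; last by move=> i; rewrite /side_set; case: ifP.
have side (i : 'I_n) : P (Y i @^-1` side_set J i) = (if i \in J then p else 1 - p)%:E.
  rewrite /side_set; case: ifP => _; first exact: Yp.
  have -> : Y i @^-1` `]t, +oo[ = ~` (Y i @^-1` `]-oo, t]).
    by apply/seteqP; split => w /=; rewrite !in_itv /= andbT ltNge => /negP.
  by rewrite probability_setC ?Yp //; exact: measurable_funPTI.
under eq_bigr do rewrite side.
rewrite prodEFin (eq_bigl predT) => [|i]; last by rewrite finset.in_setT.
rewrite (bigID (mem J)) /= (eq_bigr (fun=> p)) => [|i ->] //.
rewrite [X in _ * X](eq_bigl (fun i => i \in ~: J)) => [|i]; last by rewrite finset.in_setC.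
rewrite [X in _ * X](eq_bigr (fun=> 1 - p)) => [|i].
  by rewrite !prodr_const cardsCs finset.setCK card_ord.
by rewrite finset.in_setC => /negbTE ->.
Qed.

Definition deviation_event (p eps : R) : set T :=
  \big[setU/set0]_(J : {set 'I_n} | eps <= `|#|J|%:R / n%:R - p|) pattern_event J.

Lemma deviation_event_empirical_df (p eps : R) w :
  eps <= `|empirical_df n Y w t - p| -> deviation_event p eps w.
Proof.
rewrite empirical_dfE => dev; rewrite /deviation_event (bigD1 _ dev) /=.
by left; exact: pattern_event_self.
Qed.

Lemma measurable_deviation_event (p eps : R) : measurable (deviation_event p eps).
Proof. by apply: bigsetU_measurable => J _; exact: measurable_pattern_event. Qed.

Lemma deviation_event_le (p eps : R) : (0 < n)%N -> 0 < eps -> 0 <= p <= 1 ->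
  mutually_independent n Y -> (forall i, (i < n)%N -> P (Y i @^-1` `]-oo, t]) = p%:E) ->
  (P (deviation_event p eps) <= ((eps ^+ 4 * n%:R ^+ 2)^-1)%:E)%E.
Proof.
move=> n_gt0 eps0 /andP[p0 p1] indY Yp.
apply: le_trans (le_measure_bigsetU P _ (fun J _ => measurable_pattern_event J)) _.
pose w k := p ^+ k * (1 - p) ^+ (n - k).
rewrite (eq_bigr (fun J : {set 'I_n} => (w #|J|)%:E)) => [|J _]; last first.
  exact: probability_pattern_event.
rewrite sumEFin lee_fin.
have nR : 0 < n%:R :> R by rewrite ltr0n.
have w0 k : 0 <= w k by rewrite mulr_ge0 ?exprn_ge0 ?subr_ge0.
pose c := ((n%:R * eps) ^+ 4)^-1.
have c0 : 0 <= c by rewrite invr_ge0 exprn_ge0 // mulr_ge0 // ltW.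
(* Markov's inequality for the fourth central moment of the binomial count #|J| *)
apply: (@le_trans _ _ (\sum_(J : {set 'I_n}) w #|J| * ((#|J|%:R - n%:R * p) ^+ 4 * c))).
  rewrite [leRHS](bigID (fun J : {set 'I_n} => eps <= `|#|J|%:R / n%:R - p|)) /=.
  rewrite -[leLHS]addr0; apply: lerD; last first.
    by apply: sumr_ge0 => J _; rewrite mulr_ge0 // mulr_ge0 // exprn_even_ge0.
  apply: ler_sum => J dev; rewrite ler_peMr // /c ler_pdivlMr ?exprn_gt0 ?mulr_gt0 // mul1r.
  have dev' : n%:R * eps <= `|#|J|%:R - n%:R * p|.
    rewrite (_ : _ - _ = n%:R * (#|J|%:R / n%:R - p)); last first.
      by rewrite mulrBr mulrCA divff ?mulr1 // gt_eqF.
    by rewrite normrM gtr0_norm // ler_pM2l.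
  rewrite -[leRHS]ger0_norm ?exprn_even_ge0 // normrX.
  by apply: lerXn2r dev'; rewrite nnegrE ?normr_ge0 // mulr_ge0 // ltW.
rewrite (sum_set_card n (fun k => w k * ((k%:R - n%:R * p) ^+ 4 * c))).
have -> : \sum_(k < n.+1) (w k * ((k%:R - n%:R * p) ^+ 4 * c)) *+ 'C(n, k) =
    bin_expect p n (fun k => (k%:R - n%:R * p) ^+ 4) * c.
  rewrite /bin_expect mulr_suml; apply: eq_bigr => k _.
  by rewrite -mulr_natl /bin_weight /w; ring.
apply: le_trans (ler_wpM2r c0 (bin_expect_centered_pow4_le _ _)) _; first by rewrite p0.
by rewrite /c [leLHS](_ : _ = (eps ^+ 4 * n%:R ^+ 2)^-1) //; field; rewrite !gt_eqF.
Qed.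

End pattern_events.

(* The [n = 0] term is [c / 0 = 0]. *)
Lemma nneseries_inv_sqr_lty (R : realType) (c : R) : 0 <= c ->
  (\sum_(n <oo) (c / n%:R ^+ 2)%:E < +oo)%E.
Proof.
move=> c0; pose v n : R := c / n%:R ^+ 2.
have v0 n : 0 <= v n by rewrite divr_ge0 ?exprn_ge0.
(* [1 / k ^ 2 <= 2 / k - 2 / (k + 1)] for [k >= 1], so the partial sums telescope. *)
have partial N : \sum_(0 <= k < N.+1) v k <= 2 * c - 2 * c / N.+1%:R.
  elim: N => [|N IHN]; first by rewrite big_nat1 /v expr0n /= invr0 mulr0 divr1 subrr.
  rewrite big_nat_recr //=; apply: le_trans (lerD IHN (lexx _)) _.
  rewrite /v; set m : R := N.+1%:R.
  have m1 : 1 <= m by rewrite /m ler1n.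
  have -> : N.+2%:R = m + 1 by rewrite /m -addn1 natrD.
  rewrite -subr_ge0 (_ : _ - _ = c * (m - 1) / (m ^+ 2 * (m + 1))).
    by rewrite divr_ge0 ?mulr_ge0 ?exprn_ge0 ?subr_ge0 //; lra.
  by field; apply/andP; split; rewrite gt_eqF //; lra.
have -> : (\sum_(n <oo) (v n)%:E =
    ereal_sup (range (fun N => \sum_(0 <= k < N) (v k)%:E)))%E.
  apply/cvg_lim => //; apply: ereal_nondecreasing_cvgn.
  by apply: ereal_nondecreasing_series => n _ _; rewrite lee_fin.
apply: (@le_lt_trans _ _ (2 * c)%:E); last exact: ltry.
apply: ge_ereal_sup => _ [[|N] _ <-]; first by rewrite big_geq // lee_fin mulr_ge0.
rewrite sumEFin lee_fin; apply: le_trans (partial N) _.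
by rewrite gerBl divr_ge0 // mulr_ge0.
Qed.

Section strong_law_triangular_array.
Context d (T : measurableType d) (R : realType) (P : probability T R).
Variables (Y : nat -> nat -> {RV P >-> R}) (p : nat -> R) (t : R).
Hypothesis indY : forall n, mutually_independent n (Y n).
Hypothesis Yp : forall n i, (i < n)%N -> P (Y n i @^-1` `]-oo, t]) = (p n)%:E.

Lemma empirical_df_near (eps : R) : 0 < eps ->
  {ae P, forall w, \forall n \near \oo, `|empirical_df n (Y n) w t - p n| < eps}.
Proof.
move=> eps0.
have p01 n : (0 < n)%N -> 0 <= p n <= 1.
  move=> n0; rewrite -!lee_fin -(Yp n0) measure_ge0 probability_le1 //.
  exact: measurable_funPTI.
pose U n := if n is 0 then set0 else deviation_event n (Y n) t (p n) eps.
have mU n : measurable (U n).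
  by case: n => [|n]; [exact: measurable0|exact: measurable_deviation_event].
exists (lim_sup_set U); split.
- by apply: bigcapT_measurable => k; apply: bigcup_measurable => j _.
- apply: lim_sup_set_cvg0 => //.
  have c0 : 0 <= (eps ^+ 4)^-1 by rewrite invr_ge0 exprn_ge0 // ltW.
  apply: le_lt_trans (nneseries_inv_sqr_lty c0).
  apply: lee_nneseries => [i _ _|[|n] _]; first exact: measure_ge0.
    by rewrite measure0 /= expr0n /= invr0 mulr0.
  rewrite -invfM.
  exact: deviation_event_le (ltn0Sn n) eps0 (p01 _ (ltn0Sn n)) (@indY n.+1) (@Yp n.+1).
- move=> w /= not_near k _; apply: contrapT => notU; apply: not_near.
  exists k.+1 => // n /= kn; rewrite ltNge; apply/negP => dev; apply: notU.
  exists n; first exact: ltnW.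
  by case: n kn dev => // n _; exact: deviation_event_empirical_df.
Qed.

Lemma empirical_df_cvg :
  {ae P, forall w, empirical_df n (Y n) w t - p n @[n --> \oo] --> 0}.
Proof.
have : {ae P, forall w, forall k,
    \forall n \near \oo, `|empirical_df n (Y n) w t - p n| < k.+1%:R^-1}.
  by apply: ae_foralln => k; apply: empirical_df_near; rewrite invr_gt0.
apply: filterS => w near_w; apply/cvgr0Pnorm_lt => e e0.
have [k _ /(_ k (leqnn k)) /= ke] := near_infty_natSinv_lt (PosNum e0).
by apply: filterS (near_w k) => n /lt_trans; apply.
Qed.

End strong_law_triangular_array.

Section triangular_sampling.
Context d (T : measurableType d) (R : realType) (P : probability T R).
Variables (E : set R) (Xn : nat -> {RV P >-> R}) (Xs : nat -> nat -> nat -> {RV P >-> R}).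
Hypothesis XnE : forall n, range (Xn n) `<=` E.
Hypothesis indXs : forall m n, mutually_independent m (Xs m n).
Hypothesis dfXs : forall m n i, (i < m)%N -> distr_fun (Xs m n i) = distr_fun (Xn n).

Lemma ae_empirical_df_cvg_seq (s : seq R) : {ae P, forall w t, t \in s ->
  empirical_df n (Xs n n) w t - distr_fun (Xn n) t @[n --> \oo] --> 0}.
Proof.
apply: filter_forall_seq => t _.
have Xs_t n i : (i < n)%N -> P (Xs n n i @^-1` `]-oo, t]) = (distr_fun (Xn n) t)%:E.
  by move=> ni; rewrite distr_funE dfXs.
exact: (@empirical_df_cvg _ _ _ P (fun n => Xs n n) _ t (fun n => @indXs n n) Xs_t).
Qed.

Lemma ae_no_sample_in_gaps (s : seq R) : gaps_avoid E s -> {ae P, forall w t, t \in s ->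
  forall u, u \in s -> gap [set` s] t u -> forall n i, (i < n)%N -> ~ (t < Xs n n i w < u)}.
Proof.
move=> sE; apply: filter_forall_seq => t ts; apply: filter_forall_seq => u us.
apply: ae_imply_cst => /(sE t u ts us) gapE.
apply: ae_foralln => n; apply: ae_foralln => i; apply: ae_imply_cst => ni.
apply: ae_notin_gap => x xtu; rewrite !dfXs //.
exact: distr_fun_gap (@XnE n) gapE x xtu.
Qed.

End triangular_sampling.

Theorem mainTheorem5 (d : measure_display) (T : measurableType d) (R : realType)
  (P : probability T R) (Xn : nat -> {RV P >-> R}) (X : {RV P >-> R})
  (E : set R) (Xs : nat -> nat -> nat -> {RV P >-> R}) :
  discrete_set E ->
  range X `<=` E ->
  (forall n, range (Xn n) `<=` E) ->
  cvg_in_distribution Xn X ->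
  (forall m n, mutually_independent m (Xs m n)) ->
  (forall m n i, (i < m)%N -> distr_fun (Xs m n i) = distr_fun (Xn n)) ->
  {ae P, forall w, 
    sup (range (fun x : R => `|empirical_df n (Xs n n) w x - distr_fun X x|))
      @[n --> \oo] --> (0 : R)}.
Proof.
move=> dE XE XnE cvgX indXs dfXs.
have /choice[g gP] k : exists s, tail_grid (distr_fun X) k.+1%:R^-1 s /\ gaps_avoid E s.
  have k0 : 0 < k.+1%:R^-1 :> R by rewrite invr_gt0.
  have [s ? ?] := exists_tail_grid dE (distr_fun_nondecreasing X)
    (distr_fun_small X k0) (distr_fun_large X k0).
  by exists s.
apply: filterS2 (ae_foralln (fun k => ae_empirical_df_cvg_seq indXs dfXs (g k)))
  (ae_foralln (fun k => ae_no_sample_in_gaps XnE dfXs (gP k).2)) => w cvg_w gaps_w.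
apply: (sup_dist_cvg0 (distr_fun_ge0_le1 X) (distr_fun_nondecreasing X)) => [n x|n|k].
- exact: empirical_df_ge0_le1.
- exact: empirical_df_nondecreasing.
exists (g k); first exact: (gP k).1.
split => [t u ts us gap_tu|n t u ts us gap_tu|t ts].
- exact: distr_fun_gap XE ((gP k).2 t u ts us gap_tu).
- exact: empirical_df_gap (gaps_w k t ts u us gap_tu n).
apply/subr_cvg0; rewrite -[distr_fun X t]add0r.
under eq_fun => n do rewrite -(subrK (distr_fun (Xn n) t) (empirical_df n _ w t)).
exact: cvgD (cvg_w k t ts) (cvg_distr_fun_discrete dE XE XnE cvgX (x := t)).
Qed.
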